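(* Let $n=p_1^{\alpha_1}p_2^{\alpha_2}p_3^{\alpha_3}$, where $\alpha_1,\alpha_2,\alpha_3$ are positive integers and $p_1<p_2<p_3$ are primes. If $p_3\geq 2p_2+1$, then $\delta(\mathcal{P}(C_n))=\deg(p_3^{\alpha_3})$.
   Context: For a finite group $G$, the power graph $\mathcal{P}(G)$ is the simple undirected graph with vertex set $G$ in which two distinct vertices are adjacent if one is an integral power of the other. $C_n$ denotes the cyclic group of order $n$, identified with $\mathbb{Z}_n=\{0,1,\ldots,n-1\}$, so a positive divisor $d<n$ of $n$ is regarded as the element $d\in\mathbb{Z}_n$. $\deg(a)$ is the degree of vertex $a$ in $\mathcal{P}(C_n)$ and $\delta$ denotes minimum degree. *)

From mathcomp Require Import all_boot all_order all_fingroup all_algebra.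
Set Implicit Arguments. Unset Strict Implicit. Unset Printing Implicit Defensive.

Definition pg_adj (gT : finGroupType) (x y : gT) : bool :=
  (x != y) && ((y \in <[x]>%g) || (x \in <[y]>%g)).

Definition pg_deg (gT : finGroupType) (x : gT) : nat :=
  #|[set y : gT | pg_adj x y]|.

(* minimum degree; #|gT| is an upper bound for every degree *)
Definition pg_mindeg (gT : finGroupType) : nat :=
  \big[minn/#|gT|]_(x : gT) pg_deg x.

(* For x in Z_n, the closed neighbourhood of x in the power graph is the set of
   y with y \in <x> or x \in <y>, so deg x + 1 = A + B - E, where A, B and E count
   the y with y \in <x>, with x \in <y>, and with <y> = <x>.  By the Chinese
   remainder theorem each count is a product over the prime-power factors p^a of n,
   and the factor at p only depends on the order p^k of the p-part of x: it is
   (1, p^a, 1) when k = 0 and (p t, p^a - t, (p - 1) t) with t = p^(k-1) otherwise.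
   Replacing a factor with k = 0 by the formal value t = 0 can only lower
   deg x + 1, and for a fixed third factor deg x + 1 is bilinear in (t1, t2), so it
   is bounded below by its values at the corners t_i \in {0, p_i^(a_i - 1)}.  The
   corner (p1^(a1-1), p2^(a2-1)) with k3 = 0 is the vertex p3^a3, and the comparison
   with the remaining corners is where p3 >= 2 p2 + 1 is needed. *)

From mathcomp Require Import all_boot all_order all_fingroup all_algebra.
From mathcomp Require Import cyclic ring lra.
Set Implicit Arguments. Unset Strict Implicit. Unset Printing Implicit Defensive.
Import Order.TTheory GRing.Theory Num.Theory.

Lemma card_ord_pred N (P : pred nat) : #|[pred i : 'I_N | P i]| = count P (iota 0 N).
Proof. by rewrite cardE /enum_mem size_filter -val_enum_ord count_map enumT. Qed.

Lemma count_dvdn d N : d %| N -> count (dvdn d) (iota 0 N) = N %/ d.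
Proof.
case: N => [|N] dN; first by rewrite div0n.
rewrite divn_count_dvd big_nat_recr //= dN -sum1_count big_mkcond /=.
by rewrite dvdn0 addnC /index_iota subn1.
Qed.

Lemma count_crt P Q (a b : pred nat) : coprime P Q -> 0 < P -> 0 < Q ->
  count (fun y => a (y %% P) && b (y %% Q)) (iota 0 (P * Q)) =
  count a (iota 0 P) * count b (iota 0 Q).
Proof.
move=> coPQ P_gt0 Q_gt0; have PQ_gt0 : 0 < P * Q by rewrite muln_gt0 P_gt0.
rewrite -!card_ord_pred.
have <- : #|setX [set u : 'I_P | a u] [set v : 'I_Q | b v]| =
    #|[pred u : 'I_P | a u]| * #|[pred v : 'I_Q | b v]| by rewrite cardsX !cardsE.
pose split_mod (y : 'I_(P * Q)) := (Ordinal (ltn_pmod y P_gt0), Ordinal (ltn_pmod y Q_gt0)).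
pose glue (z : 'I_P * 'I_Q) := Ordinal (ltn_pmod (chinese P Q z.1 z.2) PQ_gt0).
have split_modK : cancel split_mod glue.
  move=> y; apply: val_inj => /=.
  by rewrite -chinese_mod // modn_small.
have glueK : cancel glue split_mod.
  move=> [u v]; congr (_, _); apply: val_inj => /=.
    by rewrite modn_dvdm ?dvdn_mulr // chinese_modl // modn_small.
  by rewrite modn_dvdm ?dvdn_mull // chinese_modr // modn_small.
rewrite -[LHS](card_image (can_inj split_modK)); apply: eq_card => -[u v].
apply/imageP/idP => [[y + [-> ->]]|]; first by rewrite !inE.
rewrite !inE => /andP[Pu Qv]; exists (glue (u, v)); last by rewrite glueK.
have /(congr1 (val \o fst)) /= glue_modP := glueK (u, v).
have /(congr1 (val \o snd)) /= glue_modQ := glueK (u, v).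
by rewrite inE /= glue_modP glue_modQ Pu Qv.
Qed.

Lemma gcdnM_coprime P Q y : coprime P Q -> gcdn (P * Q) y = gcdn P y * gcdn Q y.
Proof.
move=> coPQ; apply/eqP; rewrite eqn_dvd; apply/andP; split.
  rewrite muln_gcdl !muln_gcdr !dvdn_gcd dvdn_gcdl /=.
  have gy := dvdn_gcdr (P * Q) y.
  by rewrite dvdn_mull ?(dvdn_mulr _ gy) // dvdn_mull.
have co_g : coprime (gcdn P y) (gcdn Q y).
  by rewrite (coprime_dvdl (dvdn_gcdl _ _)) // (coprime_dvdr (dvdn_gcdl _ _)).
by rewrite dvdn_gcd dvdn_mul ?dvdn_gcdl // Gauss_dvd // !dvdn_gcdr.
Qed.

Lemma coprime_pfactors p q a b : prime p -> prime q -> p != q -> coprime (p ^ a) (q ^ b).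
Proof.
by move=> p_pr q_pr pq; rewrite coprimeXl // coprimeXr // prime_coprime // dvdn_prime2.
Qed.

Definition in_cycle N x y := gcdn N x %| gcdn N y.

Definition below_count N x := count (in_cycle N x) (iota 0 N).
Definition above_count N x := count (in_cycle N ^~ x) (iota 0 N).
Definition assoc_count N x := count (fun y => in_cycle N x y && in_cycle N y x) (iota 0 N).

Lemma order_Zp N' (x : 'I_N'.+2) : #[x]%g = N'.+2 %/ gcdn N'.+2 x.
Proof. by rewrite -{1}(Zp1_expgz x) orderXgcd order_Zp1. Qed.

Lemma mem_cycle_Zp N' (x y : 'I_N'.+2) : (y \in <[x]>%g) = in_cycle N'.+2 x y.
Proof.
have Zp_cyclic : cyclic [set: 'I_N'.+2] by apply/cyclicP; exists Zp1; exact: Zp_cycle.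
rewrite -cycle_subG -(cardSg_cyclic Zp_cyclic) ?subsetT //.
change (#[y]%g %| #[x]%g = in_cycle N'.+2 x y); rewrite !order_Zp /in_cycle.
set gx := gcdn N'.+2 x; set gy := gcdn N'.+2 y.
have [gx_dvd gy_dvd] : gx %| N'.+2 /\ gy %| N'.+2 by rewrite !dvdn_gcdl.
have gy_gt0 : 0 < gy by rewrite gcdn_gt0.
rewrite dvdn_divRL // -{2}(divnK gy_dvd) dvdn_pmul2l //.
by rewrite divn_gt0 // dvdn_leq.
Qed.

Lemma pg_deg_Zp N' (x : 'I_N'.+2) :
  (pg_deg x).+1 + assoc_count N'.+2 x = below_count N'.+2 x + above_count N'.+2 x.
Proof.
rewrite -count_predUI; congr (_ + _).
have x_self : predU (in_cycle N'.+2 x) (in_cycle N'.+2 ^~ x) x by rewrite /= /in_cycle dvdnn.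
rewrite -card_ord_pred (cardD1 x) inE x_self add1n /pg_deg.
congr _.+1; apply: eq_card => y.
by rewrite !inE /pg_adj !mem_cycle_Zp eq_sym.
Qed.

Lemma in_cycleM P Q x y : coprime P Q ->
  in_cycle (P * Q) x y = in_cycle P x y && in_cycle Q x y.
Proof.
move=> coPQ; rewrite /in_cycle !gcdnM_coprime //.
have co d e : d %| P -> e %| Q -> coprime d e.
  by move=> dP eQ; rewrite (coprime_dvdl dP) // (coprime_dvdr eQ).
apply/idP/andP => [dvd_xy|[]]; last exact: dvdn_mul.
split.
  rewrite -(Gauss_dvdl _ (p := gcdn Q y)); last by rewrite co ?dvdn_gcdl.
  exact: dvdn_trans (dvdn_mulr _ (dvdnn _)) dvd_xy.
rewrite -(Gauss_dvdr _ (n := gcdn P y)); last by rewrite coprime_sym co ?dvdn_gcdl.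
exact: dvdn_trans (dvdn_mull _ (dvdnn _)) dvd_xy.
Qed.

Lemma in_cycle_dvdr N x y : in_cycle N x y = (gcdn N x %| y).
Proof. by rewrite /in_cycle dvdn_gcd dvdn_gcdl. Qed.

Lemma in_cycle_modr N x y : in_cycle N x (y %% N) = in_cycle N x y.
Proof. by rewrite /in_cycle gcdn_modr. Qed.

Lemma in_cycle_modl N x y : in_cycle N (y %% N) x = in_cycle N y x.
Proof. by rewrite /in_cycle gcdn_modr. Qed.

Section CountMul.
Variables (P Q x : nat).
Hypotheses (coPQ : coprime P Q) (P_gt0 : 0 < P) (Q_gt0 : 0 < Q).

Lemma below_countM : below_count (P * Q) x = below_count P x * below_count Q x.
Proof.
rewrite /below_count -count_crt //; apply: eq_count => y.
by rewrite /= in_cycleM // !in_cycle_modr.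
Qed.

Lemma above_countM : above_count (P * Q) x = above_count P x * above_count Q x.
Proof.
rewrite /above_count -count_crt //; apply: eq_count => y.
by rewrite /= in_cycleM // !in_cycle_modl.
Qed.

Lemma assoc_countM : assoc_count (P * Q) x = assoc_count P x * assoc_count Q x.
Proof.
rewrite /assoc_count -count_crt //; apply: eq_count => y.
by rewrite /= !in_cycleM // !in_cycle_modl !in_cycle_modr andbACA.
Qed.
End CountMul.

Lemma below_countE N x : below_count N x = N %/ gcdn N x.
Proof. by rewrite /below_count (eq_count (in_cycle_dvdr N x)) count_dvdn ?dvdn_gcdl. Qed.

Lemma counts_dvd N x : 0 < N -> N %| x ->
  [/\ below_count N x = 1, above_count N x = N & assoc_count N x = 1].
Proof.
move=> N_gt0 /gcdn_idPl gNx.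
have top y : in_cycle N y x by rewrite /in_cycle gNx dvdn_gcdl.
rewrite /above_count /assoc_count (eq_count top) count_predT size_iota.
rewrite (eq_count (a2 := in_cycle N x)) => [|y]; last by rewrite top andbT.
by rewrite -/(below_count N x) below_countE gNx divnn N_gt0.
Qed.

Lemma counts_pfactor p a c x : prime p -> c < a -> gcdn (p ^ a) x = p ^ c ->
  [/\ below_count (p ^ a) x = p ^ (a - c),
      above_count (p ^ a) x + p ^ (a - c.+1) = p ^ a &
      assoc_count (p ^ a) x + p ^ (a - c.+1) = p ^ (a - c)].
Proof.
move=> p_pr c_lt gx; have p_gt0 := prime_gt0 p_pr.
have count_pow k : k <= a -> count (dvdn (p ^ k)) (iota 0 (p ^ a)) = p ^ (a - k).
  by move=> k_le; rewrite count_dvdn ?dvdn_exp2l // expnB.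
have below y : in_cycle (p ^ a) x y = (p ^ c %| y) by rewrite in_cycle_dvdr gx.
have above y : in_cycle (p ^ a) y x = ~~ (p ^ c.+1 %| y).
  have [j j_le gy] : exists2 j, j <= a & gcdn (p ^ a) y = p ^ j.
    by apply/dvdn_pfactor => //; exact: dvdn_gcdl.
  have -> : (p ^ c.+1 %| y) = (p ^ c.+1 %| gcdn (p ^ a) y) by rewrite dvdn_gcd dvdn_exp2l.
  by rewrite /in_cycle gx gy !dvdn_Pexp2l ?prime_gt1 // leqNgt.
split.
- by rewrite below_countE gx expnB // ltnW.
- rewrite -(count_pow c.+1 c_lt) /above_count (eq_count above) addnC.
  by rewrite count_predC size_iota.
- set s := iota 0 (p ^ a).
  have split_c : count (dvdn (p ^ c)) s =
      count (predI (predC (dvdn (p ^ c.+1))) (dvdn (p ^ c))) s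
      + count (predI (dvdn (p ^ c.+1)) (dvdn (p ^ c))) s.
    by rewrite -!count_filter addnC count_predC size_filter.
  rewrite -(count_pow c.+1 c_lt) -(count_pow c (ltnW c_lt)) split_c /assoc_count.
  congr (_ + _); apply: eq_count => y /=; first by rewrite below above andbC.
  by rewrite andb_idr //; apply: dvdn_trans; rewrite dvdn_exp2l.
Qed.

Local Open Scope ring_scope.

Lemma bilinear_ge_corners (R : realDomainType) (al be P1 P2 r1 r2 t1 t2 m : R) :
  0 < r1 -> 0 < r2 -> 0 <= t1 <= r1 -> 0 <= t2 <= r2 ->
  m <= be * P1 * P2 -> m <= be * (P1 - r1) * P2 -> m <= be * P1 * (P2 - r2) ->
  m <= al * r1 * r2 + be * (P1 - r1) * (P2 - r2) ->
  m <= al * t1 * t2 + be * (P1 - t1) * (P2 - t2).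
Proof.
move=> r1_gt0 r2_gt0 /andP[t1_ge0 t1_le] /andP[t2_ge0 t2_le] m00 m10 m01 m11.
have w00 : 0 <= (r1 - t1) * (r2 - t2) by rewrite mulr_ge0 // subr_ge0.
have w10 : 0 <= t1 * (r2 - t2) by rewrite mulr_ge0 // subr_ge0.
have w01 : 0 <= (r1 - t1) * t2 by rewrite mulr_ge0 // subr_ge0.
have w11 : 0 <= t1 * t2 by rewrite mulr_ge0.
rewrite -(ler_pM2l (mulr_gt0 r1_gt0 r2_gt0)).
(* bilinear interpolation between the four corners *)
have -> : r1 * r2 * (al * t1 * t2 + be * (P1 - t1) * (P2 - t2)) =
  (r1 - t1) * (r2 - t2) * (be * P1 * P2) + t1 * (r2 - t2) * (be * (P1 - r1) * P2) +
  (r1 - t1) * t2 * (be * P1 * (P2 - r2))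
  + t1 * t2 * (al * r1 * r2 + be * (P1 - r1) * (P2 - r2)).
  by ring.
have -> : r1 * r2 * m = (r1 - t1) * (r2 - t2) * m + t1 * (r2 - t2) * m +
  (r1 - t1) * t2 * m + t1 * t2 * m by ring.
by rewrite !lerD // ler_wpM2l.
Qed.

(* Contributions of a prime-power factor p^a of the modulus to the three counts when
   the p-component of x has order p^k: the factor is encoded by [None] if k = 0 and
   by [Some p^(k-1)] otherwise, and [r] stands for p^(a-1). *)
Definition pp_below (R : pzRingType) (p : R) (o : option R) : R :=
  if o is Some t then p * t else 1.
Definition pp_above (R : pzRingType) (p r : R) (o : option R) : R :=
  if o is Some t then p * r - t else p * r.
Definition pp_assoc (R : pzRingType) (p : R) (o : option R) : R :=
  if o is Some t then (p - 1) * t else 1.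
Definition pp_in (R : numDomainType) (lo r : R) (o : option R) : bool :=
  if o is Some t then lo <= t <= r else true.

Lemma pp_assoc_bounds (R : realDomainType) (p r : R) o :
  1 <= p -> pp_in 0 r o -> 0 <= pp_assoc p o <= pp_below p o.
Proof.
case: o => [t|] /= p_ge1 => [/andP[t_ge0 _]|_]; last by rewrite ler01 lexx.
by apply/andP; split; nra.
Qed.

Lemma pp_in_le (R : numDomainType) (lo lo' r : R) o :
  lo' <= lo -> pp_in lo r o -> pp_in lo' r o.
Proof. by case: o => //= t lo_le /andP[lo_t ->]; rewrite (le_trans lo_le lo_t). Qed.

Definition pp_state (R : pzRingType) (p a x : nat) : option R :=
  let c := logn p (gcdn (p ^ a)%N x) in
  if (c < a)%N then Some (p ^ (a - c.+1))%N%:R else None.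

Lemma pp_state_counts (R : pzRingType) p a x : prime p -> (0 < a)%N ->
  [/\ (below_count (p ^ a) x)%:R = pp_below p%:R (pp_state R p a x),
      (above_count (p ^ a) x)%:R = pp_above p%:R (p ^ a.-1)%N%:R (pp_state R p a x) &
      (assoc_count (p ^ a) x)%:R = pp_assoc p%:R (pp_state R p a x)].
Proof.
move=> p_pr a_gt0.
have [c c_le gx] : exists2 c, (c <= a)%N & gcdn (p ^ a) x = (p ^ c)%N.
  by apply/dvdn_pfactor => //; exact: dvdn_gcdl.
have pa : (p ^ a = p * p ^ a.-1)%N by rewrite -expnS prednK.
rewrite /pp_state gx pfactorK //; case: ltnP => [c_lt | c_ge] /=.
  have [-> above assoc] := counts_pfactor p_pr c_lt gx.
  have ac : (p ^ (a - c) = p * p ^ (a - c.+1))%N by rewrite -expnS subnSK.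
  rewrite ac natrM; split=> //; apply: (@addIr _ (p ^ (a - c.+1))%N%:R).
    by rewrite -natrD above subrK pa natrM.
  by rewrite -natrD assoc ac natrM mulrBl mul1r subrK.
have c_eq : c = a by apply/eqP; rewrite eqn_leq c_le c_ge.
have dx : (p ^ a %| x)%N by rewrite -{1}c_eq -gx dvdn_gcdr.
have pa_gt0 : (0 < p ^ a)%N by rewrite expn_gt0 prime_gt0.
have [-> -> ->] := counts_dvd pa_gt0 dx.
by rewrite pa natrM.
Qed.

Lemma pp_state_in (R : numDomainType) p a x : prime p ->
  pp_in 1 (p ^ a.-1)%N%:R (pp_state R p a x).
Proof.
move=> p_pr; rewrite /pp_state; case: ifP => //= _.
by rewrite ler1n ler_nat expn_gt0 prime_gt0 //= leq_pexp2l ?prime_gt0 // -subn1 leq_sub2l.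
Qed.

Lemma pp_state_coprime (R : pzRingType) p a x : (0 < a)%N -> coprime (p ^ a) x ->
  pp_state R p a x = Some (p ^ a.-1)%N%:R.
Proof. by move=> a_gt0 co; rewrite /pp_state (eqP co) logn1 a_gt0 subn1. Qed.

Lemma pp_state_dvd (R : pzRingType) p a x : prime p -> (p ^ a %| x)%N ->
  pp_state R p a x = None.
Proof. by move=> p_pr /gcdn_idPl gx; rewrite /pp_state gx pfactorK // ltnn. Qed.

Section ClosedDegree.
Variables (R : realDomainType) (p1 p2 p3 r1 r2 r3 : R).

Definition closed_deg o1 o2 o3 :=
  pp_below p1 o1 * pp_below p2 o2 * pp_below p3 o3
  + pp_above p1 r1 o1 * pp_above p2 r2 o2 * pp_above p3 r3 o3
  - pp_assoc p1 o1 * pp_assoc p2 o2 * pp_assoc p3 o3.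

Lemma closed_deg_relax1 o2 o3 : 1 <= p2 -> 1 <= p3 -> pp_in 0 r2 o2 -> pp_in 0 r3 o3 ->
  closed_deg (Some 0) o2 o3 <= closed_deg None o2 o3.
Proof.
move=> p2_ge1 p3_ge1 /(pp_assoc_bounds p2_ge1) /andP[e2 a2].
move=> /(pp_assoc_bounds p3_ge1) /andP[e3 a3].
have := ler_pM e2 e3 a2 a3.
rewrite /closed_deg /=; lra.
Qed.

Lemma closed_deg_relax2 o1 o3 : 1 <= p1 -> 1 <= p3 -> pp_in 0 r1 o1 -> pp_in 0 r3 o3 ->
  closed_deg o1 (Some 0) o3 <= closed_deg o1 None o3.
Proof.
move=> p1_ge1 p3_ge1 /(pp_assoc_bounds p1_ge1) /andP[e1 a1].
move=> /(pp_assoc_bounds p3_ge1) /andP[e3 a3].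
have := ler_pM e1 e3 a1 a3.
rewrite /closed_deg /=; lra.
Qed.

Lemma closed_deg_SomeE t1 t2 o3 : closed_deg (Some t1) (Some t2) o3 =
  (p1 * p2 * pp_below p3 o3 - (p1 - 1) * (p2 - 1) * pp_assoc p3 o3) * t1 * t2
  + pp_above p3 r3 o3 * (p1 * r1 - t1) * (p2 * r2 - t2).
Proof. by rewrite /closed_deg /=; ring. Qed.

Lemma closed_deg_le_corners s : 2 <= p1 -> p1 <= p2 -> 2 * p2 + 1 <= p3 ->
  1 <= r1 -> 1 <= r2 -> 1 <= r3 -> 0 <= s <= r3 ->
  closed_deg (Some r1) (Some r2) None <= (p3 * r3 - s) * (p1 * r1) * (p2 * r2 - r2)
  /\ closed_deg (Some r1) (Some r2) None <= (p3 * r3 - s) * (p1 * r1 - r1) * (p2 * r2).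
Proof.
move=> p1_ge2 p12 p23 r1_ge1 r2_ge1 r3_ge1 /andP[s_ge0 s_le].
have r12_ge0 : 0 <= r1 * r2 by nra.
have bound q : 2 <= q -> q <= p2 -> p3 - q <= p3 * r3 - q * s.
  move=> q_ge2 q_le; have : 0 <= (p3 - q) * (r3 - 1) by apply: mulr_ge0; lra.
  have : 0 <= q * (r3 - s) by apply: mulr_ge0; lra.
  lra.
set T := closed_deg (Some r1) (Some r2) None.
split; rewrite -subr_ge0.
- have -> : (p3 * r3 - s) * (p1 * r1) * (p2 * r2 - r2) - T =
    r1 * r2 * ((p2 - 1) * (p3 * r3 - p1 * s) - (p1 + p2 - 1)) by rewrite /T /closed_deg /=; ring.
  apply: mulr_ge0 => //; have := bound p1 p1_ge2 p12; nra.
- have -> : (p3 * r3 - s) * (p1 * r1 - r1) * (p2 * r2) - T =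
    r1 * r2 * ((p1 - 1) * (p3 * r3 - p2 * s) - (p1 + p2 - 1)) by rewrite /T /closed_deg /=; ring.
  apply: mulr_ge0 => //; have := bound p2 (le_trans p1_ge2 p12) (lexx _); nra.
Qed.

Lemma closed_deg_ge_Some t1 t2 o3 : 2 <= p1 -> p1 <= p2 -> 2 * p2 + 1 <= p3 ->
  1 <= r1 -> 1 <= r2 -> 1 <= r3 -> 0 <= t1 <= r1 -> 0 <= t2 <= r2 -> pp_in 1 r3 o3 ->
  closed_deg (Some r1) (Some r2) None <= closed_deg (Some t1) (Some t2) o3.
Proof.
move=> p1_ge2 p12 p23 r1_ge1 r2_ge1 r3_ge1 t1_in t2_in o3_in.
set T := closed_deg (Some r1) (Some r2) None; rewrite closed_deg_SomeE.
have [s above3 s_in] : exists2 s, pp_above p3 r3 o3 = p3 * r3 - s & 0 <= s <= r3.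
  case: o3 o3_in => [t /andP[t_ge1 t_le]|_]; [exists t | exists 0]; rewrite ?subr0 //.
    by apply/andP; split; lra.
  by rewrite lexx; lra.
have [side1 side2] := closed_deg_le_corners p1_ge2 p12 p23 r1_ge1 r2_ge1 r3_ge1 s_in.
have [r1_gt0 r2_gt0] : 0 < r1 /\ 0 < r2 by split; lra.
apply: (bilinear_ge_corners (r1 := r1) (r2 := r2)) => //; try by rewrite above3.
  rewrite above3; apply: le_trans side1 (ler_wpM2l _ _); last by lra.
  by apply: mulr_ge0; nra.
case: o3 o3_in {above3} => [t3 /andP[t3_ge1 _]|_] /=.
  rewrite -subr_ge0.
  have -> : (p1 * p2 * (p3 * t3) - (p1 - 1) * (p2 - 1) * ((p3 - 1) * t3)) * r1 * r2
      + (p3 * r3 - t3) * (p1 * r1 - r1) * (p2 * r2 - r2) - T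
      = r1 * r2 * ((p1 + p2 - 1) * (p3 * t3 - 1)) by rewrite /T /closed_deg /=; ring.
  by apply: mulr_ge0; [nra | apply: mulr_ge0; nra].
by rewrite /T closed_deg_SomeE.
Qed.

Lemma closed_deg_minimal o1 o2 o3 : 2 <= p1 -> p1 <= p2 -> 2 * p2 + 1 <= p3 ->
  1 <= r1 -> 1 <= r2 -> 1 <= r3 -> pp_in 1 r1 o1 -> pp_in 1 r2 o2 -> pp_in 1 r3 o3 ->
  closed_deg (Some r1) (Some r2) None <= closed_deg o1 o2 o3.
Proof.
move=> p1_ge2 p12 p23 r1_ge1 r2_ge1 r3_ge1.
move=> /(pp_in_le ler01) o1_in /(pp_in_le ler01) o2_in o3_in.
have o3_in0 := pp_in_le ler01 o3_in.
have [p1_ge1 p2_ge1 p3_ge1] : [/\ 1 <= p1, 1 <= p2 & 1 <= p3] by split; lra.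
have ge_Some t1 t2 : 0 <= t1 <= r1 -> 0 <= t2 <= r2 ->
    closed_deg (Some r1) (Some r2) None <= closed_deg (Some t1) (Some t2) o3.
  by move=> t1_in t2_in; apply: closed_deg_ge_Some.
have zero_in (r : R) : 1 <= r -> 0 <= (0 : R) <= r by rewrite lexx /=; lra.
case: o1 o1_in => [t1|] /= t1_in; case: o2 o2_in => [t2|] /= t2_in.
- exact: ge_Some.
- apply: le_trans (ge_Some _ _ t1_in (zero_in _ r2_ge1)) _.
  exact: closed_deg_relax2.
- apply: le_trans (ge_Some _ _ (zero_in _ r1_ge1) t2_in) _.
  exact: closed_deg_relax1.
- apply: le_trans (ge_Some _ _ (zero_in _ r1_ge1) (zero_in _ r2_ge1)) _.
  apply: le_trans (closed_deg_relax2 _ _ _ _) (closed_deg_relax1 _ _ _ _) => //.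
  exact: zero_in.
Qed.
End ClosedDegree.

Lemma pg_deg_closed_deg (R : realDomainType) N' p1 p2 p3 a1 a2 a3 (x : 'I_N'.+2) :
  prime p1 -> prime p2 -> prime p3 -> p1 != p2 -> p1 != p3 -> p2 != p3 ->
  (0 < a1)%N -> (0 < a2)%N -> (0 < a3)%N -> N'.+2 = (p1 ^ a1 * p2 ^ a2 * p3 ^ a3)%N ->
  (pg_deg x).+1%:R = closed_deg p1%:R p2%:R p3%:R
      (p1 ^ a1.-1)%N%:R (p2 ^ a2.-1)%N%:R (p3 ^ a3.-1)%N%:R
      (pp_state R p1 a1 x) (pp_state R p2 a2 x) (pp_state R p3 a3 x) :> R.
Proof.
move=> p1_pr p2_pr p3_pr p12 p13 p23 a1_gt0 a2_gt0 a3_gt0 NE.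
have pos p a : prime p -> (0 < p ^ a)%N by move=> p_pr; rewrite expn_gt0 prime_gt0.
have co12 := coprime_pfactors a1 a2 p1_pr p2_pr p12.
have co12_3 : coprime (p1 ^ a1 * p2 ^ a2) (p3 ^ a3).
  by rewrite coprimeMl !coprime_pfactors.
have P12_gt0 : (0 < p1 ^ a1 * p2 ^ a2)%N by rewrite muln_gt0 !pos.
(* the type of x depends on N'.+2, so x is hidden before rewriting with NE *)
have := pg_deg_Zp x; set d := pg_deg x; set y := nat_of_ord x; rewrite NE.
rewrite (below_countM _ co12_3) ?pos // (below_countM _ co12) ?pos //.
rewrite (above_countM _ co12_3) ?pos // (above_countM _ co12) ?pos //.
rewrite (assoc_countM _ co12_3) ?pos // (assoc_countM _ co12) ?pos //.
move/(congr1 (fun n => n%:R : R)); rewrite !natrD !natrM.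
have [-> -> ->] := pp_state_counts R x p1_pr a1_gt0.
have [-> -> ->] := pp_state_counts R x p2_pr a2_gt0.
have [-> -> ->] := pp_state_counts R x p3_pr a3_gt0.
by rewrite /closed_deg => <-; rewrite addrK.
Qed.

Local Close Scope ring_scope.

Lemma bigmin_attained (T : finType) (F : T -> nat) m x0 :
  F x0 <= m -> (forall x, F x0 <= F x) -> \big[minn/m]_(x : T) F x = F x0.
Proof.
move=> x0_le_m x0_min; change (\big[Order.min/m]_(x : T) F x = F x0).
by apply/le_anti/andP; split; [exact: bigmin_inf | apply/bigmin_geP].
Qed.

Theorem corollary5p3 (p1 p2 p3 a1 a2 a3 n : nat) :
  prime p1 -> prime p2 -> prime p3 -> p1 < p2 -> p2 < p3 ->
  0 < a1 -> 0 < a2 -> 0 < a3 ->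
  n = p1 ^ a1 * p2 ^ a2 * p3 ^ a3 ->
  2 * p2 + 1 <= p3 ->
  pg_mindeg 'Z_n = pg_deg (inZp (p3 ^ a3) : 'Z_n).
Proof.
move=> p1_pr p2_pr p3_pr lt12 lt23 a1_gt0 a2_gt0 a3_gt0 nE p3_big.
have P_gt1 p a : prime p -> 0 < a -> 1 < p ^ a.
  by move=> p_pr a_gt0; rewrite -(exp1n a) ltn_exp2r // prime_gt1.
have P3_lt_n : p3 ^ a3 < n.
  rewrite nE ltn_Pmull ?(ltnW (P_gt1 _ _ p3_pr a3_gt0)) //.
  by rewrite (leq_trans (P_gt1 _ _ p1_pr a1_gt0)) // leq_pmulr // expn_gt0 prime_gt0.
have n_gt1 : 1 < n by apply: leq_ltn_trans P3_lt_n; rewrite expn_gt0 prime_gt0.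
have NE : (Zp_trunc n).+2 = p1 ^ a1 * p2 ^ a2 * p3 ^ a3 by rewrite Zp_cast.
have x0E : nat_of_ord (inZp (p3 ^ a3) : 'Z_n) = p3 ^ a3 by rewrite /= Zp_cast // modn_small.
have [p12 p13 p23] : [/\ p1 != p2, p1 != p3 & p2 != p3].
  by rewrite !neq_ltn lt12 lt23 (ltn_trans lt12 lt23).
have deg x := pg_deg_closed_deg int x p1_pr p2_pr p3_pr p12 p13 p23 a1_gt0 a2_gt0 a3_gt0 NE.
apply: bigmin_attained => [|x]; first exact: max_card.
rewrite -ltnS -(ler_nat int) !deg x0E (pp_state_dvd _ p3_pr (dvdnn _)).
rewrite (pp_state_coprime _ a1_gt0 (coprime_pfactors a1 a3 p1_pr p3_pr p13)).
rewrite (pp_state_coprime _ a2_gt0 (coprime_pfactors a2 a3 p2_pr p3_pr p23)).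
apply: closed_deg_minimal; rewrite ?pp_state_in // ?ler1n ?expn_gt0 ?prime_gt0 //.
- by rewrite ler_nat prime_gt1.
- by rewrite ler_nat ltnW.
- by rewrite -natrM natr1 ler_nat -addn1.
Qed.
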